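(* Let $a,b$ be coprime integers with $0<a\le b$ and let $a/b=[0,u_1,\dots,u_n]$ be a simple continued fraction expansion of odd depth $n=2i+1$ ($i\ge 0$), with convergents $p_k/q_k$. Let $D$ be the standard line $\{(x,y)\in\mathbb{Z}^2: 0\le ax-by<a+b\}$, let $U_1=(0,0)$ and $U_2=(b,a)$ (consecutive upper leaning points of $D$), let $L_1$ be the lower leaning point of $D$ with $0<x\le b$, and $L_2=L_1+(b,a)$. Then \[ \overrightarrow{U_1L_1}=(u_{2i+1}-1)(q_{2i},p_{2i})+(q_{2i-1},p_{2i-1})+(1,-1),\qquad \overrightarrow{L_1U_2}=(q_{2i}-1,\;p_{2i}+1). \] Moreover, the Freeman word of the DSS $[U_1L_1]$ has $E(z_{2i})^{u_{2i+1}-1}$ as a left factor (prefix), and the Freeman word of the DSS $[L_1U_2]$ has $E(z_{2i-1})^{u_{2i}}$ as a right factor (suffix).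
   Context: A standard line $\{\mu\le ax-by<\mu+|a|+|b|\}$ is a 4-connected path of lattice points; points with $ax-by=\mu$ are upper leaning points, those with $ax-by=\mu+|a|+|b|-1$ lower leaning points. For two points $P,Q$ of $D$, $[PQ]$ denotes the path of points of $D$ from $P$ to $Q$, and its Freeman word records its unit moves, with $0$ denoting the step $(1,0)$ and $1$ the step $(0,1)$. For $a/b=[0,u_1,\dots,u_n]$, the $k$-th convergent is $z_k=p_k/q_k=[0,u_1,\dots,u_k]$, with $(p_0,q_0)=(0,1)$, $(p_{-1},q_{-1})=(1,0)$, $u_0=0$ and $(p_k,q_k)=u_k(p_{k-1},q_{k-1})+(p_{k-2},q_{k-2})$. The words $E(z_k)$ are defined by $E(z_{-1})=1$, $E(z_0)=0$, $E(z_1)=0^{u_1}1$, $E(z_{2j+1})=E(z_{2j})^{u_{2j+1}}E(z_{2j-1})$ and $E(z_{2j})=E(z_{2j-2})E(z_{2j-1})^{u_{2j}}$; $E(z_n)$ is the pattern of slope $a/b$ (the Freeman word between consecutive upper leaning points). *)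

From mathcomp Require Import all_boot all_order all_algebra.
Set Implicit Arguments. Unset Strict Implicit. Unset Printing Implicit Defensive.
Import Order.TTheory GRing.Theory Num.Theory.
Local Open Scope ring_scope.

Definition pt := (int * int)%type.

Definition inD (a b : nat) (P : pt) : bool :=
  (0 <= a%:Z * P.1 - b%:Z * P.2) && (a%:Z * P.1 - b%:Z * P.2 < a%:Z + b%:Z).

(** Freeman letters: 0 = step (1,0), 1 = step (0,1).
    fword a b P n : the word of the n unit moves of the 4-connected path D
    starting at P (the next point of D is P+(1,0) if it lies in D, else P+(0,1)). *)
Fixpoint fword (a b : nat) (P : pt) (n : nat) : seq nat :=
  match n with
  | 0 => [::]
  | n'.+1 =>
      if inD a b (P.1 + 1, P.2) then 0%N :: fword a b (P.1 + 1, P.2) n'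
      else 1%N :: fword a b (P.1, P.2 + 1) n'
  end.

Definition freeman (a b : nat) (P Q : pt) : seq nat :=
  fword a b P (absz ((Q.1 + Q.2) - (P.1 + P.2))%R).

Fixpoint cfv (x0 : nat) (l : seq nat) : rat :=
  match l with
  | [::] => x0%:R
  | x1 :: l' => x0%:R + (cfv x1 l')^-1
  end.

(** Partial quotients u_k of [0, u_1, ..., u_n] given as us = [u_1; ...; u_n],
    with the convention u_0 = 0. *)
Definition ucoef (us : seq nat) (k : nat) : nat :=
  if k is k'.+1 then nth 0%N us k' else 0%N.

(** cpair us k = ((p_{k-1}, q_{k-1}), (p_k, q_k)), with
    (p_{-1},q_{-1}) = (1,0), (p_0,q_0) = (0,1),
    (p_k,q_k) = u_k (p_{k-1},q_{k-1}) + (p_{k-2},q_{k-2}). *)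
Fixpoint cpair (us : seq nat) (k : nat) : (nat * nat) * (nat * nat) :=
  match k with
  | 0 => ((1%N, 0%N), (0%N, 1%N))
  | k'.+1 =>
      let: (pr, cu) := cpair us k' in
      (cu, (ucoef us k * cu.1 + pr.1, ucoef us k * cu.2 + pr.2)%N)
  end.

Definition pconv (us : seq nat) (k : nat) : nat := (cpair us k).2.1.
Definition qconv (us : seq nat) (k : nat) : nat := (cpair us k).2.2.
Definition pconv_prev (us : seq nat) (k : nat) : nat := (cpair us k).1.1.
Definition qconv_prev (us : seq nat) (k : nat) : nat := (cpair us k).1.2.

Definition wpow (w : seq nat) (m : nat) : seq nat := flatten (nseq m w).

(** Epair us k = (E(z_{k-1}), E(z_k)) with E(z_{-1}) = 1, E(z_0) = 0,
    E(z_{2j+1}) = E(z_{2j})^{u_{2j+1}} E(z_{2j-1}),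
    E(z_{2j})   = E(z_{2j-2}) E(z_{2j-1})^{u_{2j}}   (j >= 1);
    E(z_1) = 0^{u_1} 1 is the case j = 0 of the odd rule. *)
Fixpoint Epair (us : seq nat) (k : nat) : seq nat * seq nat :=
  match k with
  | 0 => ([:: 1%N], [:: 0%N])
  | k'.+1 =>
      let: (Em, Ek) := Epair us k' in
      if odd k then (Ek, wpow Ek (ucoef us k) ++ Em)
      else (Ek, Em ++ wpow Ek (ucoef us k))
  end.

Definition Ez (us : seq nat) (k : nat) : seq nat := (Epair us k).2.
Definition Ez_prev (us : seq nat) (k : nat) : seq nat := (Epair us k).1.

From mathcomp Require Import all_boot all_order all_algebra.
From mathcomp Require Import zify ring.
Set Implicit Arguments.
Unset Strict Implicit.
Unset Printing Implicit Defensive.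
Import Order.TTheory GRing.Theory Num.Theory.
Local Open Scope ring_scope.

(* Track a point (x, y) of D by its remainder r = a x - b y in [0, a + b): the
   letter 0 adds a and the letter 1 subtracts b, so the Freeman word read from
   a point depends only on its remainder, and n letters later the remainder is
   (r + a n) mod (a + b).
   Run Euclid's algorithm on (b, a) with the partial quotients, getting
   remainders (x_k, y_k).  By induction on k, E(z_k) is the word read from
   every remainder of a window of length x_k (k even) or x_k + y_k (k odd),
   and it shifts the remainder by y_k (resp. -y_k); E(z_{k-1}) behaves dually
   with x_k.
   For coprime a, b and odd depth 2i+1 the algorithm ends with y_{2i} = 1 and
   x_{2i} = u_{2i+1}, so a q_{2i} - b p_{2i} = 1, which determines
   L1 = (b - q_{2i} + 1, a - p_{2i} - 1).  From U1 (remainder 0), E(z_{2i}) is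
   then read u_{2i+1} - 1 times in a row; from L1 (remainder a + b - 1) the
   walk reaches remainder u_{2i} y_{2i-1} after p_{2i-2} + q_{2i-2} letters,
   and from there reads E(z_{2i-1}) u_{2i} times up to U2. *)

Section RemainderWalk.

Variables a b : nat.

Definition in_strip (r : int) : bool := (0 <= r) && (r < a%:Z + b%:Z).

Definition rnext (r : int) : int :=
  if in_strip (r + a%:Z) then r + a%:Z else r - b%:Z.

Fixpoint rword (r : int) (n : nat) : seq nat :=
  if n is n'.+1 then (if in_strip (r + a%:Z) then 0%N else 1%N) :: rword (rnext r) n'
  else [::].

Definition rwalk (r : int) (n : nat) : int := iter n rnext r.

Lemma fword_rword P n : fword a b P n = rword (a%:Z * P.1 - b%:Z * P.2) n.
Proof.
elim: n P => [|n IH] [x y] //=; rewrite /inD /rnext /= !IH /=.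
have -> : a%:Z * (x + 1) - b%:Z * y = (a%:Z * x - b%:Z * y) + a%:Z by ring.
have -> : a%:Z * x - b%:Z * (y + 1) = (a%:Z * x - b%:Z * y) - b%:Z by ring.
by rewrite /in_strip; case: (_ && _).
Qed.

Lemma rword_cat r m n : rword r (m + n) = rword r m ++ rword (rwalk r m) n.
Proof. by elim: m r => [|m IH] r //=; rewrite IH /rwalk -iterS iterSr. Qed.

Lemma rnext_in_strip r : in_strip r -> in_strip (rnext r).
Proof. by rewrite /rnext /in_strip; case: ifP => // /negbT; lia. Qed.

Lemma rwalk_mod r n :
  in_strip r -> rwalk r n = ((r + a%:Z * n%:Z) %% (a%:Z + b%:Z))%Z.
Proof.
elim: n r => [|n IH] r hr; first by rewrite mulr0 addr0 modz_small.
rewrite /rwalk iterSr -/(rwalk _ _) IH ?rnext_in_strip // /rnext.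
case: ifP => _; first by congr (_ %% _)%Z; rewrite -addn1 PoszD; ring.
have -> : r - b%:Z + a%:Z * n%:Z = (-1) * (a%:Z + b%:Z) + (r + a%:Z * n.+1%:Z).
  by rewrite -addn1 PoszD; ring.
by rewrite modzMDl.
Qed.

Definition reads (w : seq nat) (r d : int) : Prop :=
  rword r (size w) = w /\ rwalk r (size w) = r + d.

Lemma reads_cat v w r d e :
  reads v r d -> reads w (r + d) e -> reads (v ++ w) r (d + e).
Proof.
move=> [vP vE] [wP wE]; rewrite /reads size_cat rword_cat vP vE wP; split=> //.
by rewrite addnC /rwalk iterD -/(rwalk _ _) -/(rwalk r _) vE wE addrA.
Qed.

Lemma reads_wpow w m r d :
  (forall t, (t < m)%N -> reads w (r + t%:Z * d) d) -> reads (wpow w m) r (m%:Z * d).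
Proof.
elim: m r => [|m IH] r Hw; first by rewrite /reads /= mul0r addr0.
have -> : m.+1%:Z * d = d + m%:Z * d by rewrite -addn1 PoszD; ring.
apply: reads_cat; first by have := Hw 0%N erefl; rewrite mul0r addr0.
apply: IH => t ht; have := Hw t.+1 ht.
by rewrite -addn1 PoszD mulrDl mul1r (addrC (t%:Z * d)) addrA.
Qed.

Lemma reads_prefix w r d n : reads w r d -> (size w <= n)%N -> prefix w (rword r n).
Proof. by move=> [wP _] /subnKC <-; rewrite rword_cat wP prefix_prefix. Qed.

Lemma reads_suffix w r m d : reads w (rwalk r m) d -> suffix w (rword r (m + size w)).
Proof. by move=> [wP _]; rewrite rword_cat wP suffix_suffix. Qed.

End RemainderWalk.

Lemma size_wpow w m : size (wpow w m) = (m * size w)%N.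
Proof. by elim: m => [|m IH] //=; rewrite size_cat IH mulSn. Qed.

Section Convergents.

Variable us : seq nat.

Lemma cpairS k : cpair us k.+1 =
  ((cpair us k).2, (ucoef us k.+1 * (cpair us k).2.1 + (cpair us k).1.1,
                    ucoef us k.+1 * (cpair us k).2.2 + (cpair us k).1.2)%N).
Proof. by rewrite /=; case: (cpair us k) => [[? ?] [? ?]]. Qed.

Lemma EzS k : Ez us k.+1 =
  if odd k.+1 then wpow (Ez us k) (ucoef us k.+1) ++ Ez_prev us k
  else Ez_prev us k ++ wpow (Ez us k) (ucoef us k.+1).
Proof. by rewrite /Ez /Ez_prev /=; case: (Epair us k) => ? ?; case: ifP. Qed.

Lemma Ez_prevS k : Ez_prev us k.+1 = Ez us k.
Proof. by rewrite /Ez /Ez_prev /=; case: (Epair us k) => ? ?; case: ifP. Qed.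

Lemma size_Ez k :
  size (Ez us k) = (pconv us k + qconv us k)%N /\
  size (Ez_prev us k) = (pconv_prev us k + qconv_prev us k)%N.
Proof.
rewrite /pconv /qconv /pconv_prev /qconv_prev.
elim: k => [|k [IH1 IH2]] //; rewrite EzS Ez_prevS cpairS IH1 /=.
by case: ifP => _; rewrite size_cat size_wpow IH1 IH2; split => //; lia.
Qed.

Lemma det_conv k :
  (pconv_prev us k)%:Z * (qconv us k)%:Z - (pconv us k)%:Z * (qconv_prev us k)%:Z
  = (-1) ^+ k.
Proof.
rewrite /qconv /pconv /qconv_prev /pconv_prev.
elim: k => [|k IH]; first by rewrite /= expr0.
by rewrite cpairS /= exprS -IH !PoszD !PoszM; ring.
Qed.

End Convergents.

Lemma cfv_ge0 x0 l : 0 <= cfv x0 l.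
Proof.
elim: l x0 => [|x1 l IH] x0 /=; first exact: ler0n.
by rewrite addr_ge0 ?ler0n // invr_ge0.
Qed.

Lemma cfv_head x0 l : cfv x0 l = x0%:R + cfv 0 l.
Proof. by case: l => [|x1 l] /=; rewrite ?addr0 ?add0r. Qed.

Lemma cfv_euclid_step (x y u : nat) rest : (0 < x)%N -> (0 < u)%N ->
  (y%:R : rat) = x%:R * cfv 0 (u :: rest) ->
  [/\ (u * y <= x)%N, (0 < y)%N & ((x - u * y)%N%:R : rat) = y%:R * cfv 0 rest].
Proof.
move=> hx hu hy.
have hc1 : 1 <= cfv u rest by rewrite cfv_head -[1]addr0 lerD ?cfv_ge0 ?ler1n.
have hxc : (x%:R : rat) = y%:R * cfv u rest.
  by rewrite hy /= add0r -mulrA mulVf ?mulr1 // gt_eqF // (lt_le_trans ltr01 hc1).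
have hy0 : (0 < y)%N.
  rewrite lt0n; apply: contraTneq hx => y0.
  by rewrite -(ltr0n rat) hxc y0 mul0r ltxx.
have hle : (u * y <= x)%N.
  by rewrite -(ler_nat rat) natrM hxc mulrC ler_wpM2l ?ler0n // cfv_head lerDl cfv_ge0.
by split => //; rewrite natrB // natrM hxc cfv_head; ring.
Qed.

Lemma mulz_bounded_eq0 (b z : int) : - b < b * z < b -> z = 0.
Proof. nia. Qed.

Lemma lower_leaning_point (a b p q : nat) (l1 l2 : int) :
  (q <= b)%N -> a%:Z * q%:Z - b%:Z * p%:Z = 1 ->
  a%:Z * l1 - b%:Z * l2 = a%:Z + b%:Z - 1 -> 0 < l1 <= b%:Z ->
  l1 = b%:Z - q%:Z + 1 /\ l2 = a%:Z - p%:Z - 1.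
Proof.
move=> hqb hpq hl hl1.
have hq : (0 < q)%N.
  by move: hpq; case: q {hqb} => // /eqP; rewrite mulr0 sub0r eqr_oppLR -PoszM.
set d1 := l1 - (b%:Z - q%:Z + 1); set d2 := l2 - (a%:Z - p%:Z - 1).
have hd : a%:Z * d1 = b%:Z * d2 by rewrite /d1 /d2; lia.
have hdz : d1 = b%:Z * (q%:Z * d2 - p%:Z * d1).
  rewrite -[LHS]mulr1 -hpq.
  have -> : d1 * (a%:Z * q%:Z - b%:Z * p%:Z) = q%:Z * (a%:Z * d1) - b%:Z * p%:Z * d1.
    by ring.
  by rewrite hd; ring.
have hd1 : d1 = 0.
  by rewrite hdz (@mulz_bounded_eq0 b%:Z (q%:Z * d2 - p%:Z * d1)) ?mulr0 // -hdz /d1; lia.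
have hd2 : d2 = 0.
  by apply/eqP; move: hd; rewrite hd1 mulr0 => /esym/eqP; rewrite mulf_eq0; lia.
by move: hd1 hd2; rewrite /d1 /d2; lia.
Qed.

Section EuclidRemainders.

Variables (a b : nat) (us : seq nat).

Local Notation reads := (reads a b).

(* (erem k) = (x_k, y_k); the subtraction is truncated, which is harmless
   as long as [euclid_ok] holds. *)
Fixpoint erem (k : nat) : nat * nat :=
  if k is k'.+1 then ((erem k').2, (erem k').1 - ucoef us k * (erem k').2)%N
  else (b, a).

Definition euclid_ok (k : nat) : Prop :=
  forall j, (j < k)%N ->
    (0 < ucoef us j.+1)%N /\ (ucoef us j.+1 * (erem j).2 <= (erem j).1)%N.

Lemma euclid_okW k j : (j <= k)%N -> euclid_ok k -> euclid_ok j.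
Proof. by move=> hjk ok l hl; apply: ok (leq_trans hl hjk). Qed.

Lemma gcdn_erem k : euclid_ok k -> gcdn (erem k).1 (erem k).2 = gcdn b a.
Proof.
elim: k => [|k IH] ok //; rewrite -IH; last exact: euclid_okW (leqnSn k) ok.
have [_ hle] := ok k (ltnSn k).
by rewrite /= -{2}(subnKC hle) [RHS]gcdnC gcdnMDl.
Qed.

Lemma erem_conv k : euclid_ok k ->
  a%:Z * (qconv us k)%:Z - b%:Z * (pconv us k)%:Z = (-1) ^+ k * (erem k).2%:Z /\
  a%:Z * (qconv_prev us k)%:Z - b%:Z * (pconv_prev us k)%:Z
    = - ((-1) ^+ k * (erem k).1%:Z).
Proof.
rewrite /qconv /pconv /qconv_prev /pconv_prev.
elim: k => [|k IH] ok; first by rewrite /= expr0 !mul1r; split; lia.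
have [IH1 IH2] := IH (euclid_okW (leqnSn k) ok).
have [_ hle] := ok k (ltnSn k); rewrite /= in hle.
rewrite cpairS /= exprS -(subzn hle) !PoszD !PoszM; split; last by rewrite IH1; ring.
move: IH1 IH2; set p := (cpair us k).2.1; set q := (cpair us k).2.2.
set p' := (cpair us k).1.1; set q' := (cpair us k).1.2; set u := nth 0 us k.
have -> : a%:Z * (u%:Z * q%:Z + q'%:Z) - b%:Z * (u%:Z * p%:Z + p'%:Z)
  = u%:Z * (a%:Z * q%:Z - b%:Z * p%:Z) + (a%:Z * q'%:Z - b%:Z * p'%:Z) by ring.
by move=> -> ->; ring.
Qed.

Lemma erem_le k : (a <= b)%N -> ((erem k).1 <= b)%N /\ ((erem k).2 <= b)%N.
Proof.
move=> hab; elim: k => [|k [h1 h2]] //=.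
by split => //; apply: leq_trans (leq_subr _ _) h1.
Qed.

Definition Ez_reads k : Prop :=
  let x := (erem k).1%:Z in let y := (erem k).2%:Z in
  if odd k then
    (forall r, y <= r < y + x -> reads (Ez us k) r (- y)) /\
    (forall r, 0 <= r < y + x -> reads (Ez_prev us k) r x)
  else
    (forall r, 0 <= r < x -> reads (Ez us k) r y) /\
    (forall r, x <= r < x + y -> reads (Ez_prev us k) r (- x)).

Lemma Ez_readsP k : euclid_ok k -> Ez_reads k.
Proof.
elim: k => [|k IH] ok.
  rewrite /Ez_reads /=; split => r hr; rewrite /reads /= /rnext /in_strip /Ez /Ez_prev /=;
  by case: ifP => h; split => //; lia.
have [hu hle] := ok k (ltnSn k); rewrite /= in hu hle.
have := IH (euclid_okW (leqnSn k) ok).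
rewrite /Ez_reads EzS Ez_prevS /= -(subzn hle) PoszM.
move: hu hle; set x := (erem k).1; set y := (erem k).2; set u := nth 0%N us k.
move=> hu hle; have hu1 : 1 <= u%:Z by lia.
case: (odd k) => /= -[readsE readsE']; split => r hr.
- have -> : x%:Z - u%:Z * y%:Z = x%:Z + u%:Z * (- y%:Z) by ring.
  apply: reads_cat; first by apply: readsE'; lia.
  apply: reads_wpow => t ht; apply: readsE.
  have : t%:Z + 1 <= u%:Z by lia.
  nia.
- by apply: readsE; nia.
- have -> : - (x%:Z - u%:Z * y%:Z) = u%:Z * y%:Z + - x%:Z by ring.
  apply: reads_cat; last by apply: readsE'; nia.
  apply: reads_wpow => t ht; apply: readsE.
  have : t%:Z + 1 <= u%:Z by lia.
  nia.
- by apply: readsE; nia.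
Qed.

Lemma prefix_wpow_Ez k n : ~~ odd k -> euclid_ok k.+1 -> (erem k).2 = 1%N ->
  ((ucoef us k.+1).-1 * size (Ez us k) <= n)%N ->
  prefix (wpow (Ez us k) (ucoef us k.+1).-1) (rword a b 0 n).
Proof.
move=> even_k ok y1 hn; apply: (reads_prefix (d := (ucoef us k.+1).-1%:Z * 1)).
  have := Ez_readsP (euclid_okW (leqnSn k) ok).
  rewrite /Ez_reads (negbTE even_k) y1 => -[readsE _].
  have [_ hle] := ok k (ltnSn k); rewrite y1 muln1 in hle.
  apply: reads_wpow => t ht; apply: readsE; lia.
by rewrite size_wpow.
Qed.

Lemma suffix_wpow_Ez k : odd k -> (a <= b)%N -> euclid_ok k.+1 ->
  (erem k.+1).2 = 1%N ->
  suffix (wpow (Ez us k) (ucoef us k.+1))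
         (rword a b (a%:Z + b%:Z - 1) (pconv us k.+1 + qconv us k.+1)).
Proof.
move=> odd_k hab ok y1.
have [_ hle] := ok k (ltnSn k).
have okk := euclid_okW (leqnSn k) ok.
have [hxb _] := erem_le k hab.
have [_ convE] := erem_conv okk.
rewrite -signr_odd odd_k expr1 mulN1r opprK in convE.
have [sizeE _] := size_Ez us k.
move: y1 hle hxb convE; rewrite /=; set u := nth 0%N us k.
set x := (erem k).1; set y := (erem k).2 => y1 hle hxb convE.
have xE : x = (u * y + 1)%N by rewrite -y1 subnKC.
have -> : (pconv us k.+1 + qconv us k.+1
    = (pconv_prev us k + qconv_prev us k) + size (wpow (Ez us k) u))%N.
  by rewrite size_wpow sizeE /pconv /qconv /pconv_prev /qconv_prev cpairS /=; lia.
apply: reads_suffix.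
have -> : rwalk a b (a%:Z + b%:Z - 1) (pconv_prev us k + qconv_prev us k) = (u * y)%N.
  rewrite rwalk_mod; last by rewrite /in_strip; lia.
  have -> : a%:Z + b%:Z - 1 + a%:Z * (pconv_prev us k + qconv_prev us k)%N
      = (1 + (pconv_prev us k)%:Z) * (a%:Z + b%:Z) + (u * y)%N.
    by move: convE; rewrite xE !PoszD; lia.
  by rewrite modzMDl modz_small //; lia.
have := Ez_readsP okk; rewrite /Ez_reads odd_k => -[readsE _].
apply: (reads_wpow (d := - y%:Z)) => t ht; apply: readsE; nia.
Qed.

Section Expansion.

Hypotheses (b_gt0 : (0 < b)%N) (us_gt0 : all (fun u => 0 < u)%N us)
           (abE : (a%:R / b%:R : rat) = cfv 0 us).

Lemma ucoef_gt0 k : (k < size us)%N -> (0 < ucoef us k.+1)%N.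
Proof. by move=> hk; apply: (allP us_gt0); rewrite mem_nth. Qed.

Lemma erem_cfv k : (k <= size us)%N ->
  ((erem k).2%:R : rat) = (erem k).1%:R * cfv 0 (drop k us) /\ (0 < (erem k).1)%N.
Proof.
elim: k => [|k IH] hk; first by rewrite drop0 /= -abE mulrC divfK // pnatr_eq0 -lt0n.
have [yE x_gt0] := IH (ltnW hk); rewrite (drop_nth 0 hk) in yE.
by have [_ y_gt0 ->] := cfv_euclid_step x_gt0 (ucoef_gt0 hk) yE.
Qed.

Lemma euclid_cfv : euclid_ok (size us) /\ (erem (size us)).2 = 0%N.
Proof.
split=> [j hj|].
  have [yE x_gt0] := erem_cfv (ltnW hj); rewrite (drop_nth 0 hj) in yE.
  by have [] := cfv_euclid_step x_gt0 (ucoef_gt0 hj) yE; split=> //; apply: ucoef_gt0.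
have [yE _] := erem_cfv (leqnn _).
by apply/eqP; rewrite -(eqr_nat rat) yE drop_size /= mulr0.
Qed.

End Expansion.

Section LastStep.

Variable k : nat.
Hypotheses (ab_coprime : coprime a b) (ok : euclid_ok k.+1)
           (last_rem : (erem k.+1).2 = 0%N).

Lemma erem_last : (erem k).2 = 1%N /\ (erem k).1 = ucoef us k.+1.
Proof.
have y1 : (erem k).2 = 1%N.
  by have := gcdn_erem ok; rewrite last_rem gcdn0 gcdnC (eqP ab_coprime).
split=> //; have [_ hle] := ok (ltnSn k).
move: last_rem hle => /= /eqP; rewrite subn_eq0 y1 muln1 => hge hle.
by apply: anti_leq; rewrite hle hge.
Qed.

Lemma conv_last : a = pconv us k.+1 /\ b = qconv us k.+1.
Proof.
have [y1 _] := erem_last.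
have [conv conv'] := erem_conv ok; rewrite last_rem mulr0 /= y1 mulr1 in conv conv'.
have det := det_conv us k.+1.
set e : int := (-1) ^+ k.+1 in conv' det.
have e_neq0 : e != 0 by rewrite signr_eq0.
move: conv conv' det; set P := pconv us k.+1; set Q := qconv us k.+1.
set P' := pconv_prev us k.+1; set Q' := qconv_prev us k.+1 => conv conv' det.
split; apply/eqP; rewrite -eqz_nat; apply/eqP/(mulIf e_neq0); rewrite -[in LHS]det.
- have -> : a%:Z * (P'%:Z * Q%:Z - P%:Z * Q'%:Z)
      = P'%:Z * (a%:Z * Q%:Z - b%:Z * P%:Z) - P%:Z * (a%:Z * Q'%:Z - b%:Z * P'%:Z).
    by ring.
  by rewrite conv conv'; ring.
- have -> : b%:Z * (P'%:Z * Q%:Z - P%:Z * Q'%:Z)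
      = Q'%:Z * (a%:Z * Q%:Z - b%:Z * P%:Z) - Q%:Z * (a%:Z * Q'%:Z - b%:Z * P'%:Z).
    by ring.
  by rewrite conv conv'; ring.
Qed.

End LastStep.

End EuclidRemainders.

Theorem proposition1 (a b : nat) (us : seq nat) (i : nat) (L1 : int * int) :
  (0 < a)%N -> (a <= b)%N -> coprime a b ->
  all (fun x => 0 < x)%N us -> size us = (2 * i + 1)%N ->
  (a%:R / b%:R : rat) = cfv 0 us ->
  a%:Z * L1.1 - b%:Z * L1.2 = a%:Z + b%:Z - 1 -> 0 < L1.1 <= b%:Z ->
  let U1 : int * int := (0, 0) in
  let U2 : int * int := (b%:Z, a%:Z) in
  let u := ucoef us in
  [/\ ((L1.1 - U1.1, L1.2 - U1.2) =
        (((u (2 * i + 1)%N)%:Z - 1) * (qconv us (2 * i))%:Z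
          + (qconv_prev us (2 * i))%:Z + 1,
         ((u (2 * i + 1)%N)%:Z - 1) * (pconv us (2 * i))%:Z
          + (pconv_prev us (2 * i))%:Z - 1)),
      ((U2.1 - L1.1, U2.2 - L1.2) =
        ((qconv us (2 * i))%:Z - 1, (pconv us (2 * i))%:Z + 1)),
      prefix (wpow (Ez us (2 * i)) (u (2 * i + 1)%N).-1) (freeman a b U1 L1)
    & suffix (wpow (Ez_prev us (2 * i)) (u (2 * i)%N)) (freeman a b L1 U2)].
Proof.
move=> a_gt0 hab cop us_gt0 size_us abE + hl1 U1 U2 u.
case: L1 hl1 => l1 l2 /= hl1 hL1; rewrite /U1 /U2 /u addn1 {U1 U2 u}.
have b_gt0 : (0 < b)%N := leq_trans a_gt0 hab.
have [ok last_rem] := euclid_cfv b_gt0 us_gt0 abE; rewrite size_us addn1 in ok last_rem.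
have [y1 _] := erem_last cop ok last_rem.
have [conv _] := erem_conv (euclid_okW (leqnSn _) ok).
rewrite y1 -signr_odd oddM /= expr0 mulr1 in conv.
have [u_gt0 _] := ok _ (ltnSn (2 * i)).
have [] := conv_last cop ok last_rem; rewrite /pconv /qconv cpairS /=.
rewrite -/(pconv us _) -/(qconv us _) -/(pconv_prev us _) -/(qconv_prev us _) => aE bE.
have q_le_b : (qconv us (2 * i) <= b)%N.
  by rewrite bE (leq_trans (leq_pmull _ u_gt0)) ?leq_addr.
have [l1E l2E] := lower_leaning_point q_le_b conv hL1 hl1.
have [sizeE _] := size_Ez us (2 * i).
split; try by rewrite l1E l2E bE aE !PoszD !PoszM; congr pair; ring.
- rewrite /freeman fword_rword /= !mulr0 subr0; apply: prefix_wpow_Ez; rewrite ?oddM //=.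
  by rewrite sizeE l1E l2E {1}aE {1}bE; lia.
- rewrite /freeman fword_rword /= hL1.
  have -> : `|(b%:Z + a%:Z - (l1 + l2))%R|%N = (pconv us (2 * i) + qconv us (2 * i))%N.
    by rewrite l1E l2E; lia.
  case: i {size_us conv u_gt0 last_rem q_le_b aE bE l1E l2E sizeE} ok y1 => [|j] ok y1.
    by rewrite muln0; apply: suffix0s.
  rewrite mulnS add2n Ez_prevS in ok y1 *.
  by apply: suffix_wpow_Ez => //; [rewrite /= oddM | apply: euclid_okW ok].
Qed.
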